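(* Given any $\lambda\in(0,1)$, $\epsilon_p\in(0,1)$, $H>0$ and any constants $c_1,c_2\ge4$, there exists a set of MDPs $\mathcal M=\{m_1,m_2\}$ with horizon $H$ that is $\lambda$-separable but is not well-separated.
   Context: MDPs are tabular with common state and action spaces; $P_i(s,a)=P_i(\cdot\mid s,a)$. $\mathcal M$ is $\lambda$-separable if for every $i\ne j$ there exists $(s,a)$ with $\|P_i(s,a)-P_j(s,a)\|_1\ge\lambda$. Well-separated (entropy-based separation): let $\Pi$ be the class of all history-dependent, possibly non-Markovian policies, and for $\pi\in\Pi$ let $\tau\sim(m,\pi)$ be a length-$H$ trajectory sampled from MDP $m$ under $\pi$, with $\Pr_{m,\pi}(\tau)$ its probability. $\mathcal M$ (with $M=|\mathcal M|$) is well-separated (with parameters $\epsilon_p,c_1,c_2$) if for all $m,m'\in\mathcal M$ with $m'\ne m$ and all $\pi\in\Pi$, \[ \Pr_{\tau\sim(m,\pi)}\Big(\frac{\Pr_{m',\pi}(\tau)}{\Pr_{m,\pi}(\tau)}>(\epsilon_p/M)^{c_1}\Big)<(\epsilon_p/M)^{c_2}. \] *)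

From HB Require Import structures.
From mathcomp Require Import all_boot all_order all_algebra.
From mathcomp Require Import reals exp.
Set Implicit Arguments. Unset Strict Implicit. Unset Printing Implicit Defensive.
Import Order.TTheory GRing.Theory Num.Theory.
Local Open Scope ring_scope.

Section MDP.
Variables (R : realType) (S A : finType).

Definition is_distr (T : finType) (p : T -> R) :=
  (forall x, 0 <= p x) /\ \sum_(x : T) p x = 1.

Record mdp := MDP {
  init : S -> R;
  trans : S -> A -> S -> R;
  init_distr : is_distr init;
  trans_distr : forall s a, is_distr (trans s a) }.

Definition l1_trans (m1 m2 : mdp) (s : S) (a : A) : R :=
  \sum_(s' : S) `| trans m1 s a s' - trans m2 s a s' |.

Definition separable (M : nat) (lam : R) (ms : 'I_M -> mdp) :=
  forall i j : 'I_M, i != j ->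
    exists s a, lam <= l1_trans (ms i) (ms j) s a.

(* history-dependent (non-Markovian), possibly randomized policy:
   given the past state-action pairs and the current state,
   a distribution over actions *)
Definition policy := seq (S * A) -> S -> A -> R.
Definition is_policy (pi : policy) := forall h s, is_distr (pi h s).

(* probability of the remaining steps [rest] of a trajectory, given the
   history [hist] and the last state-action pair [prev] *)
Fixpoint traj_prob_aux (m : mdp) (pi : policy) (hist : seq (S * A))
    (prev : S * A) (rest : seq (S * A)) : R :=
  match rest with
  | [::] => 1
  | sa :: r =>
      trans m prev.1 prev.2 sa.1 * pi (rcons hist prev) sa.1 sa.2 *
      traj_prob_aux m pi (rcons hist prev) sa r
  end.

Definition traj_prob (m : mdp) (pi : policy) (tau : seq (S * A)) : R :=
  match tau with
  | [::] => 1
  | sa :: r => init m sa.1 * pi [::] sa.1 sa.2 * traj_prob_aux m pi [::] sa r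
  end.

Definition prob_ratio_gt (H : nat) (m m' : mdp) (pi : policy) (thr : R) : R :=
  \sum_(tau : H.-tuple (S * A) |
          thr < traj_prob m' pi tau / traj_prob m pi tau)
     traj_prob m pi tau.

Definition well_separated (H M : nat) (eps c1 c2 : R) (ms : 'I_M -> mdp) :=
  forall i j : 'I_M, i != j -> forall pi : policy, is_policy pi ->
    prob_ratio_gt H (ms i) (ms j) pi (powR (eps / M%:R) c1)
      < powR (eps / M%:R) c2.

End MDP.

From HB Require Import structures.
From mathcomp Require Import all_boot all_order all_algebra.
From mathcomp Require Import reals exp lra.

Set Implicit Arguments.
Unset Strict Implicit.
Unset Printing Implicit Defensive.
Import Order.TTheory GRing.Theory Num.Theory.
Local Open Scope ring_scope.

(* Take two MDPs on the states {s0, s} that both start in s0: the "reset" MDP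
   always jumps to s0, the "stay" MDP never moves.  From s their transition
   laws are the Dirac masses at s0 and at s, at L1 distance 2 >= lam, so the
   pair is lam-separable.  But from s0 both stay in s0 forever, so under any
   policy the constant trajectory s0 ... s0 is sure for both MDPs; its
   likelihood ratio 1 exceeds the threshold (eps/2)^c1 < 1, with probability
   1 >= (eps/2)^c2, so the pair is not well-separated. *)

Lemma powR_lt1 (R : realType) (a r : R) : 0 <= a < 1 -> 0 < r -> a `^ r < 1.
Proof.
move=> /andP[a_ge0 a_lt1] r_gt0.
have -> : 1 = 1 `^ r :> R by rewrite powR1.
by rewrite gt0_ltr_powR // ?nnegrE.
Qed.

Lemma powR_le1 (R : realType) (a r : R) : 0 < a <= 1 -> 0 <= r -> a `^ r <= 1.
Proof. by move=> a01 r_ge0; rewrite -(powRr0 a) ger_powR. Qed.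

Section Dirac.
Variables (R : realType) (T : finType).

Definition dirac (t0 : T) : T -> R := fun t => (t == t0)%:R.

Lemma dirac_distr (t0 : T) : is_distr (dirac t0).
Proof.
split=> [t|]; first exact: ler0n.
rewrite (bigD1 t0) //= big1 => [|t /negbTE tt0]; last by rewrite /dirac tt0.
by rewrite /dirac eqxx addr0.
Qed.

Lemma l1_dirac (t1 t2 : T) :
  t1 != t2 -> \sum_(t : T) `|dirac t1 t - dirac t2 t| = 2.
Proof.
move=> t12; rewrite (bigD1 t1) // (bigD1 t2) 1?eq_sym //= big1.
  rewrite /dirac !eqxx (negbTE t12) eq_sym (negbTE t12).
  by rewrite subr0 sub0r normrN normr1 addr0.
by move=> t /andP[/negbTE tt1 /negbTE tt2]; rewrite /dirac tt1 tt2 subrr normr0.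
Qed.

End Dirac.

Section Trajectories.
Variables (R : realType) (S A : finType).
Implicit Types (m : mdp R S A) (pi : policy R S A).

Lemma traj_prob_aux_ge0 m pi hist prev rest :
  is_policy pi -> 0 <= traj_prob_aux m pi hist prev rest.
Proof.
move=> pi_distr; elim: rest hist prev => [|sa rest IH] hist prev //=.
rewrite !mulr_ge0 //; first by case: (trans_distr m prev.1 prev.2).
by case: (pi_distr (rcons hist prev) sa.1).
Qed.

Lemma traj_prob_ge0 m pi tau : is_policy pi -> 0 <= traj_prob m pi tau.
Proof.
move=> pi_distr; case: tau => [|sa rest] //=.
rewrite !mulr_ge0 ?traj_prob_aux_ge0 //; first by case: (init_distr m).
by case: (pi_distr [::] sa.1).
Qed.

Section ConstantTrajectory.
Variables (m : mdp R S A) (pi : policy R S A) (s0 : S) (a0 : A).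
Hypotheses (init_s0 : init m s0 = 1) (trans_s0 : trans m s0 a0 s0 = 1)
  (pi_a0 : forall hist, pi hist s0 a0 = 1).

Lemma traj_prob_aux_nseq hist n :
  traj_prob_aux m pi hist (s0, a0) (nseq n (s0, a0)) = 1.
Proof. by elim: n hist => [|n IH] hist //=; rewrite trans_s0 pi_a0 IH !mulr1. Qed.

Lemma traj_prob_nseq n : traj_prob m pi (nseq n (s0, a0)) = 1.
Proof. by case: n => [|n] //=; rewrite init_s0 pi_a0 traj_prob_aux_nseq !mulr1. Qed.

End ConstantTrajectory.

Lemma prob_ratio_gt_ge H m m' pi thr (tau : H.-tuple (S * A)) :
  is_policy pi -> thr < traj_prob m' pi tau / traj_prob m pi tau ->
  traj_prob m pi tau <= prob_ratio_gt H m m' pi thr.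
Proof.
move=> pi_distr tau_gt; rewrite /prob_ratio_gt (bigD1 tau) //= lerDl.
by apply: sumr_ge0 => tau' _; apply: traj_prob_ge0.
Qed.

Lemma not_well_separated_sure_traj H M eps c1 c2 (ms : 'I_M -> mdp R S A)
    i j pi (tau : H.-tuple (S * A)) :
  0 < eps / M%:R < 1 -> 0 < c1 -> 0 <= c2 -> i != j -> is_policy pi ->
  traj_prob (ms i) pi tau = 1 -> traj_prob (ms j) pi tau = 1 ->
  ~ well_separated H eps c1 c2 ms.
Proof.
move=> /andP[a_gt0 a_lt1] c1_gt0 c2_ge0 ij pi_distr tau_i tau_j ws.
have thr_lt1 : (eps / M%:R) `^ c1 < 1 by rewrite powR_lt1 // ltW.
have bound_le1 : (eps / M%:R) `^ c2 <= 1 by rewrite powR_le1 // a_gt0 ltW.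
have sure : 1 <= prob_ratio_gt H (ms i) (ms j) pi ((eps / M%:R) `^ c1).
  by rewrite -{1}tau_i prob_ratio_gt_ge // tau_i tau_j divr1.
have := ws i j ij pi pi_distr; rewrite ltNge.
by move/negP; apply; apply: le_trans sure.
Qed.

Definition reset_mdp (s0 : S) : mdp R S A :=
  MDP (dirac_distr R s0) (fun _ _ => dirac_distr R s0).

Definition stay_mdp (s0 : S) : mdp R S A :=
  MDP (dirac_distr R s0) (fun s _ => dirac_distr R s).

Lemma l1_trans_reset_stay (s0 s : S) (a : A) :
  s != s0 -> l1_trans (reset_mdp s0) (stay_mdp s0) s a = 2.
Proof. by move=> ss0; rewrite /l1_trans l1_dirac // eq_sym. Qed.

Lemma l1_transC m1 m2 s a : l1_trans m1 m2 s a = l1_trans m2 m1 s a.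
Proof. by apply: eq_bigr => s' _; rewrite distrC. Qed.

Lemma separable_I2 lam (ms : 'I_2 -> mdp R S A) s a :
  lam <= l1_trans (ms ord0) (ms ord_max) s a -> separable lam ms.
Proof.
have ord2E (k : 'I_2) : k = ord0 \/ k = ord_max.
  by case: k => [[|[|k]] k_lt] //; [left | right]; apply: val_inj.
move=> lam_le i j ij; exists s, a.
by case: (ord2E i) (ord2E j) ij => -> [] -> //; rewrite l1_transC.
Qed.

End Trajectories.

Theorem lemma6 (R : realType) (lam eps c1 c2 : R) (H : nat) :
  0 < lam < 1 -> 0 < eps < 1 -> (0 < H)%N -> 4 <= c1 -> 4 <= c2 ->
  exists (S A : finType) (ms : 'I_2 -> mdp R S A),
    separable lam ms /\ ~ well_separated H eps c1 c2 ms.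
Proof.
move=> /andP[_ lam_lt1] /andP[eps_gt0 eps_lt1] _ c1_ge4 c2_ge4.
pose ms (i : 'I_2) : mdp R bool unit :=
  if i == ord0 then reset_mdp R unit false else stay_mdp R unit false.
exists bool, unit, ms; split.
  apply: (separable_I2 (s := true) (a := tt)).
  by rewrite l1_trans_reset_stay //; lra.
pose pi : policy R bool unit := fun _ _ => dirac R tt.
have pi_distr : is_policy pi by move=> h s; apply: dirac_distr.
have sure i : traj_prob (ms i) pi (nseq_tuple H (false, tt)) = 1.
  by apply: traj_prob_nseq => //; rewrite /ms; case: (i == ord0).
apply: (not_well_separated_sure_traj (i := ord0) (j := ord_max) _ _ _ _
          pi_distr (sure _) (sure _)) => //; lra.
Qed.
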